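(* Let $I=\{i_1,\dots,i_r\}\subset[n-1]$ with $0=i_0<i_1<\dots<i_r<i_{r+1}=n$, let $h\in\mathcal H_{I,n}$, and let $1\le k\le r+1$. Put $I'=I\cup\{i_{k-1}+1,\dots,i_k-1\}$ and let $h'\in\mathcal H_{I',n}$ be defined by $h'|_{I\cup\{n\}}=h$ and $h'(i)=h(i_k)$ for $i_{k-1}<i\le i_k$. Then $\mathsf{csf}_q(h')=[i_k-i_{k-1}]_q!\,\mathsf{csf}_q(h)$.
   Context: For $I\subset[n-1]$, $\mathcal H_{I,n}$ is the set of maps $h:I\cup\{n\}\to I\cup\{n\}$ with $h(i)\ge i$ and $h(i)\le h(j)$ for $i<j$ in $I$. For $h\in\mathcal H_{I,n}$ with $I=\{i_1<\dots<i_r\}$, $i_0=0$, $i_{r+1}=n$, the weighted graph of $h$ has vertex set $I\cup\{n\}$, edges $(i,j)$ for $i<j\le h(i)$, and weights $w_h(i_k)=i_k-i_{k-1}$. A proper coloring assigns to each vertex $i$ a subset $\gamma(i)\subset\mathbb N$ with $|\gamma(i)|=w_h(i)$ and $\gamma(i)\cap\gamma(j)=\emptyset$ for every edge $(i,j)$. $\mathsf{csf}_q(h)=\sum_{\gamma\text{ proper}}q^{\mathsf{asc}_h(\gamma)}x_\gamma$ with $x_\gamma=\prod_i\prod_{a\in\gamma(i)}x_a$ and $\mathsf{asc}_h(\gamma)=\sum_{(i,j)\text{ edge}}|\{(a,b)\in\gamma(i)\times\gamma(j):a<b\}|$. $[m]_q!=\prod_{s=1}^m(1+q+\dots+q^{s-1})$.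 *)

From HB Require Import structures.
From mathcomp Require Import all_boot all_order all_algebra.
From mathcomp Require Import mpoly.
Set Implicit Arguments. Unset Strict Implicit. Unset Printing Implicit Defensive.
Import Order.TTheory GRing.Theory Num.Theory.

Section CSF.
Variable n : nat.
Implicit Types (I : {set 'I_n.+1}) (h : 'I_n.+1 -> 'I_n.+1).

Definition Vset I : {set 'I_n.+1} := I :|: [set ord_max].

(* h \in H_{I,n} (h is a total function; only its values on I \cup {n} matter) *)
Definition inH I h : Prop :=
  [/\ forall i, i \in Vset I -> h i \in Vset I,
      forall i, i \in Vset I -> (i <= h i)%N &
      forall i j, i \in I -> j \in I -> (i < j)%N -> (h i <= h j)%N].

(* i_0 = 0, i_1 < ... < i_r the elements of I, i_{r+1} = n (default value) *)
Definition iseq I (k : nat) : 'I_n.+1 :=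
  nth ord_max (ord0 :: sort (fun x y : 'I_n.+1 => (x <= y)%N) (enum I)) k.

(* the predecessor of i among {0} \cup I *)
Definition prevI I (i : 'I_n.+1) : nat := (\max_(j in I | (j < i)%N) (j : nat))%N.

Definition weight I (i : 'I_n.+1) : nat := (i - prevI I i)%N.

Definition edge I h (i j : 'I_n.+1) : bool :=
  [&& i \in Vset I, j \in Vset I, (i < j)%N & (j <= h i)%N].

Variable N : nat. (* colours 'I_N represent {1, ..., N} *)

Definition proper I h (g : {ffun 'I_n.+1 -> {set 'I_N}}) : bool :=
  [&& [forall i, (i \notin Vset I) ==> (g i == set0)],
      [forall i, (i \in Vset I) ==> (#|g i| == weight I i)] &
      [forall i, forall j, edge I h i j ==> [disjoint g i & g j]]].

Definition asc I h (g : {ffun 'I_n.+1 -> {set 'I_N}}) : nat :=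
  (\sum_i \sum_(j | edge I h i j)
     #|[set p : 'I_N * 'I_N | [&& p.1 \in g i, p.2 \in g j & (p.1 < p.2)%N]]|)%N.

Definition xg (g : {ffun 'I_n.+1 -> {set 'I_N}}) : {mpoly {poly int}[N]} :=
  (\prod_(i : 'I_n.+1) \prod_(a in g i) 'X_a)%R.

(* csf_q(h) specialised to the variables x_1, ..., x_N (x_m = 0 for m > N) *)
Definition csf I h : {mpoly {poly int}[N]} :=
  (\sum_(g | proper I h g) ('X ^+ asc I h g)%:MP * xg g)%R.

End CSF.

Definition qfact (m : nat) : {poly int} :=
  (\prod_(s < m) \sum_(t < s.+1) 'X ^+ t)%R.

From Pilot Require Import Defs.
From HB Require Import structures.
From mathcomp Require Import all_boot all_order all_algebra.
From mathcomp Require Import mpoly.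
From mathcomp Require Import zify.
Import GRing.Theory.
Set Implicit Arguments. Unset Strict Implicit. Unset Printing Implicit Defensive.

(* Insert the vertex u = v - 1 just below a vertex v of weight w,
   with h(u) = h(v).  Then u and v are adjacent and have the same other
   neighbours, so a proper colouring of the new graph is the same thing as a
   proper colouring g of the old one together with the colour d of g(v) that
   stays at v, the other w - 1 colours moving to u.  The ascent number grows by
   the rank of d in g(v), and summing q^rank over d gives [w]_q.  Inserting
   i_k - 1, i_k - 2, ..., i_{k-1} + 1 one at a time from the top thus multiplies
   csf_q by [w]_q for w = i_k - i_{k-1}, ..., 2, i.e. by [i_k - i_{k-1}]_q!. *)

Section Colourings.
Variables n N : nat.
Implicit Types (J : {set 'I_n.+1}) (h : 'I_n.+1 -> 'I_n.+1).
Implicit Type g : {ffun 'I_n.+1 -> {set 'I_N}}.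

Lemma proper_colouringP J h g :
  reflect [/\ forall i, i \notin Vset J -> g i = set0,
              forall i, i \in Vset J -> #|g i| = weight J i &
              forall i j, edge J h i j -> [disjoint g i & g j]]
          (Defs.proper J h g).
Proof.
apply: (iffP and3P) => [[/forallP P1 /forallP P2 /forallP P3]|[P1 P2 P3]]; split.
- by move=> i /(implyP (P1 i))/eqP.
- by move=> i /(implyP (P2 i))/eqP.
- by move=> i j; apply/implyP; move/forallP: (P3 i).
- by apply/forallP => i; apply/implyP => /P1->.
- by apply/forallP => i; apply/implyP => /P2->.
- by do 2!apply/forallP => ?; apply/implyP => /P3.
Qed.

Lemma edge_irr J h i : edge J h i i = false.
Proof. by rewrite /edge ltnn !andbF. Qed.

Lemma eq_csf J h1 h2 : {in Vset J, h1 =1 h2} -> csf N J h1 = csf N J h2.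
Proof.
move=> eq_h; have eq_edge : edge J h1 =2 edge J h2.
  by move=> i j; rewrite /edge; case iJ: (i \in Vset J); rewrite //= eq_h.
have eq_proper g : Defs.proper J h1 g = Defs.proper J h2 g.
  by congr [&& _, _ & _]; do 2!apply: eq_forallb => ?; rewrite eq_edge.
have eq_asc g : asc J h1 g = asc J h2 g.
  by apply: eq_bigr => i _; apply: eq_bigl => j; rewrite eq_edge.
by apply: eq_big => g; rewrite ?eq_proper // eq_asc.
Qed.

End Colourings.

Section Ascents.
Variable N : nat.
Implicit Types (A B : {set 'I_N}) (d : 'I_N).

(* [asc J h g] is convertible to [\sum_i \sum_(j | edge J h i j) ascents (g i) (g j)]. *)
Definition ascents A B : nat :=
  #|[set p : 'I_N * 'I_N | [&& p.1 \in A, p.2 \in B & (p.1 < p.2)%N]]|.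

Lemma ascentsE A B : ascents A B = (\sum_(x in A) \sum_(y in B) (x < y))%N.
Proof.
rewrite /ascents -sum1_card pair_big_dep /= big_mkcond [RHS]big_mkcond /=.
by apply: eq_bigr => -[x y] _; rewrite inE /=; case: (x \in A); case: (y \in B); case: (x < y)%N.
Qed.

Lemma ascents0l B : ascents set0 B = 0.
Proof. by rewrite ascentsE big_set0. Qed.

Lemma ascents0r A : ascents A set0 = 0.
Proof. by rewrite ascentsE big1 // => x _; rewrite big_set0. Qed.

Lemma ascentsUl A A' B : [disjoint A & A'] ->
  ascents (A :|: A') B = (ascents A B + ascents A' B)%N.
Proof.
by move=> AA'; rewrite !ascentsE -bigU //; apply: eq_bigl => x; rewrite !inE.
Qed.

Lemma ascentsUr A B B' : [disjoint B & B'] ->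
  ascents A (B :|: B') = (ascents A B + ascents A B')%N.
Proof.
move=> BB'; rewrite !ascentsE -big_split; apply: eq_bigr => x _.
by rewrite -bigU //; apply: eq_bigl => y; rewrite !inE.
Qed.

Lemma ascents_set1r A d : ascents (A :\ d) [set d] = (\sum_(x in A) (x < d))%N.
Proof.
rewrite ascentsE [RHS](big_setID [set d]) /= [X in (_ = X + _)%N]big1 => [|x].
  by apply: eq_bigr => x _; rewrite big_set1.
by rewrite !inE => /andP[_ /eqP->]; rewrite ltnn.
Qed.

Lemma sum_rank (V : nmodType) (S : {set 'I_N}) (F : nat -> V) :
  (\sum_(d in S) F (\sum_(x in S) (x < d))%N = \sum_(t < #|S|) F t)%R.
Proof.
move HS : #|S| => m; elim: m S HS => [|m IH] S HS.
  by rewrite (cards0_eq HS) big_set0 big_ord0.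
have [d0 Sd0] : exists d0, d0 \in S by apply/set0Pn; apply: contra_eqN HS => /eqP->; rewrite cards0.
have [mx Smx maxS] := arg_maxnP (fun x : 'I_N => val x) Sd0.
have {}Smx : mx \in S := Smx.
have {}maxS : {in S, forall x : 'I_N, (x <= mx)%N} := maxS.
have HS' : #|S :\ mx| = m by move: HS; rewrite (cardsD1 mx) Smx add1n => -[].
rewrite (big_setD1 mx) //= big_ord_recr /= addrC; congr (_ + F _)%R.
  rewrite -(IH _ HS'); apply: eq_bigr => d; rewrite !inE => /andP[dmx Sd].
  by rewrite (big_setD1 mx) //= ltnNge maxS.
rewrite -HS' -sum1_card (big_setD1 mx) //= ltnn add0n; apply: eq_bigr => x.
by rewrite !inE => /andP[xmx /maxS]; rewrite ltn_neqAle val_eqE xmx => ->.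
Qed.

End Ascents.

Section MergeVertices.
Variables (n N : nat) (J : {set 'I_n.+1}) (h : 'I_n.+1 -> 'I_n.+1) (u v : 'I_n.+1).
Hypotheses (vJ : v \in Vset J) (uJ : u \notin Vset J) (uSv : u.+1 = v :> nat).
Hypotheses (prev_lt_u : (prevI J v < u)%N) (h_neq_u : {in Vset J, forall x, h x != u}).
Hypotheses (v_le_hv : (v <= h v)%N) (hu : h u = h v).

Local Notation J' := (u |: J).
Local Notation colouring := {ffun 'I_n.+1 -> {set 'I_N}}.
Implicit Type g : colouring.

Lemma neq_uv : u != v.
Proof. by rewrite -val_eqE /= -uSv neq_ltn ltnSn. Qed.

Lemma Vset_split : Vset J' = u |: Vset J.
Proof. by rewrite /Vset setUA. Qed.

Lemma u_notin_J : u \notin J.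
Proof. by apply: contra uJ; rewrite inE => ->. Qed.

Lemma u_in_Vset_split : u \in Vset J'.
Proof. by rewrite Vset_split setU11. Qed.

Lemma v_in_Vset_split : v \in Vset J'.
Proof. by rewrite Vset_split in_setU1 vJ orbT. Qed.

Lemma prevI_split x :
  prevI J' x = if (u < x)%N then maxn u (prevI J x) else prevI J x.
Proof.
by rewrite /prevI big_mkcondr big_setU1 ?u_notin_J //= -big_mkcondr; case: ifP; rewrite ?max0n.
Qed.

Lemma weight_split_v : weight J' v = 1.
Proof. by rewrite /weight prevI_split -uSv ltnSn (maxn_idPl (ltnW prev_lt_u)) subSnn. Qed.

Lemma weight_split_u : weight J v = (weight J' u).+1.
Proof.
rewrite /weight prevI_split ltnn.
have -> : prevI J u = prevI J v.
  apply: eq_bigl => j; rewrite -uSv ltnS [(j <= u)%N]leq_eqVlt val_eqE.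
  by case: eqVneq => [->|]; rewrite ?ltnn ?andbF ?(negbTE u_notin_J).
rewrite -uSv; lia.
Qed.

Lemma weight_split x : x \in Vset J -> x != v -> weight J' x = weight J x.
Proof.
move=> xJ xv; rewrite /weight prevI_split; case: ltnP => // ux.
have vx : (v < x)%N by rewrite ltn_neqAle eq_sym xv -uSv ux.
case/setUP: vJ => [vJ0|]; last by rewrite inE => /eqP vn; move: vx; rewrite vn ltnNge -ltnS ltn_ord.
have : (v <= prevI J x)%N by apply: leq_bigmax_cond; rewrite vJ0.
by rewrite -uSv => /ltnW/maxn_idPr->.
Qed.

Definition glue (x : 'I_n.+1) : 'I_n.+1 := if x == u then v else x.

Lemma edge_split i j :
  edge J' h i j = ((i == u) && (j == v)) || edge J h (glue i) (glue j).
Proof.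
have u_lt x : x != u -> (u < x)%N = (v <= x)%N.
  by rewrite -val_eqE -uSv /= => xu; rewrite ltn_neqAle eq_sym xu.
rewrite /edge Vset_split /glue !in_setU1.
case: (eqVneq i u) => [->|iu] /=.
  rewrite vJ hu /=; case: (eqVneq j u) => [->|ju] /=.
    by rewrite !ltnn andbF orbF (negbTE neq_uv).
  case: (eqVneq j v) => [->|jv] /=; first by rewrite vJ v_le_hv -uSv ltnSn.
  by rewrite u_lt // [(v < j)%N]ltn_neqAle eq_sym jv.
case: (eqVneq j u) => [->|ju] /=; last by [].
case iJ: (i \in Vset J); rewrite ?andbF //= vJ -uSv.
move: iu (h_neq_u iJ); rewrite -!val_eqE /= => /eqP iu /eqP hiu; lia.
Qed.

Definition merge g : colouring :=
  [ffun x => if x == u then set0 else if x == v then g u :|: g v else g x].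

Lemma big_glue_fibre (R : Type) (idx : R) (op : Monoid.com_law idx)
    (F : {set 'I_N} -> R) g :
    F set0 = idx -> F (g u :|: g v) = op (F (g u)) (F (g v)) ->
  forall y, \big[op/idx]_(x | glue x == y) F (g x) = F (merge g y).
Proof.
move=> F0 FU y; rewrite ffunE /glue.
case: (eqVneq y u) => [->|yu].
  rewrite big_pred0 // => x.
  by case: (eqVneq x u) => [_|/negbTE //]; rewrite eq_sym (negbTE neq_uv).
case: (eqVneq y v) => [->|yv].
  rewrite (bigD1 u) ?eqxx //= FU (big_pred1 v) // => x.
  by case: (eqVneq x u) => [->|] /=; rewrite ?andbT ?andbF // (negbTE neq_uv).
rewrite (big_pred1 y (F := fun x => F (g x))) // => x.
by case: (eqVneq x u) => [->|] /=; rewrite // ![_ == y]eq_sym (negbTE yu) (negbTE yv).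
Qed.

Lemma big_glue (R : Type) (idx : R) (op : Monoid.com_law idx)
    (H : 'I_n.+1 -> {set 'I_N} -> R) g :
    (forall y, H y set0 = idx) ->
    (forall y, H y (g u :|: g v) = op (H y (g u)) (H y (g v))) ->
  \big[op/idx]_x H (glue x) (g x) = \big[op/idx]_y H y (merge g y).
Proof.
move=> H0 HU; rewrite (partition_big glue xpredT) //; apply: eq_bigr => y _.
by rewrite -(big_glue_fibre (op := op) (F := H y)) //; apply: eq_bigr => x /eqP <-.
Qed.

Lemma xg_merge g : [disjoint g u & g v] -> xg (merge g) = xg g.
Proof.
move=> guv; rewrite /xg -(big_glue (H := fun _ A => \prod_(a in A) 'X_a)%R) //.
  by move=> _; rewrite big_set0.
by move=> _; rewrite -bigU //; apply: eq_bigl => a; rewrite !inE.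
Qed.

Lemma asc_split_glue g : asc J' h g =
  (ascents (g u) (g v) +
   \sum_i \sum_(j | edge J h (glue i) (glue j)) ascents (g i) (g j))%N.
Proof.
have split_if i j :
  (if ((i == u) && (j == v)) || edge J h (glue i) (glue j)
   then ascents (g i) (g j) else 0) =
  ((if (i == u) && (j == v) then ascents (g i) (g j) else 0) +
   (if edge J h (glue i) (glue j) then ascents (g i) (g j) else 0))%N.
  case: (boolP (_ && _)) => [/andP[/eqP-> /eqP->] | _] //.
  by rewrite /glue eqxx eq_sym (negbTE neq_uv) edge_irr addn0.
rewrite /asc; under [in RHS]eq_bigr => i _ do rewrite big_mkcond.
under eq_bigr => i _ do rewrite (eq_bigl _ _ (edge_split i)) big_mkcond.
under eq_bigr => i _ do (under eq_bigr => j _ do rewrite split_if; rewrite big_split).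
rewrite big_split /=; congr (_ + _)%N.
rewrite (bigD1 u) //= [X in (_ + X)%N]big1 ?addn0; last first.
  by move=> i /negbTE iu; rewrite big1 // => j; rewrite iu.
by rewrite (bigD1 v) //= !eqxx big1 ?addn0 // => j /negbTE->; rewrite andbF.
Qed.

Lemma asc_merge g : [disjoint g u & g v] ->
  (\sum_i \sum_(j | edge J h (glue i) (glue j)) ascents (g i) (g j))%N = asc J h (merge g).
Proof.
move=> guv; rewrite /asc; under [RHS]eq_bigr => i _ do rewrite big_mkcond.
rewrite -(big_glue (H := fun y A =>
  \sum_j (if edge J h y j then ascents A (merge g j) else 0))%N) /=; last 2 first.
- by move=> y; rewrite big1 // => j _; rewrite ascents0l if_same.
- by move=> y; rewrite -big_split; apply: eq_bigr => j _; rewrite ascentsUl //; case: ifP.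
apply: eq_bigr => i _; rewrite big_mkcond.
rewrite -(big_glue (H := fun y B =>
  if edge J h (glue i) y then ascents (g i) B else 0)) /= => [//|y|y].
- by rewrite ascents0r if_same.
- by rewrite ascentsUr //; case: ifP.
Qed.

Lemma merge_bigcup g y : merge g y = \bigcup_(x | glue x == y) g x.
Proof. by rewrite (big_glue_fibre (op := @setU _) (F := id)). Qed.

Lemma merge_vE g : merge g v = g u :|: g v.
Proof. by rewrite ffunE eq_sym (negbTE neq_uv) eqxx. Qed.

Lemma mergeE g x : x != u -> x != v -> merge g x = g x.
Proof. by move=> /negbTE xu /negbTE xv; rewrite ffunE xu xv. Qed.

Lemma disjoint_split g : Defs.proper J' h g -> [disjoint g u & g v].
Proof. by case/proper_colouringP => _ _; apply; rewrite edge_split !eqxx. Qed.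

Lemma proper_merge g : Defs.proper J' h g -> Defs.proper J h (merge g).
Proof.
move=> pg; have guv := disjoint_split pg; case/proper_colouringP: pg => g0 gw gdis.
apply/proper_colouringP; split=> [i iJ|i iJ|i j ij].
- rewrite ffunE; case: eqVneq => // iu; rewrite ifN ?g0 //.
    by rewrite Vset_split in_setU1 negb_or iu.
  by apply: contraNneq iJ => ->.
- have iu : i != u by apply: contraNneq uJ => <-.
  case: (eqVneq i v) => [->|iv]; last first.
    by rewrite mergeE // gw -?(weight_split iJ) // Vset_split in_setU1 iJ orbT.
  rewrite merge_vE cardsU (disjoint_setI0 guv) cards0 subn0 weight_split_u.
  by rewrite !gw ?u_in_Vset_split ?v_in_Vset_split // weight_split_v addn1.
- rewrite !merge_bigcup; apply: bigcup_disjoint => y /eqP gy.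
  rewrite disjoint_sym; apply: bigcup_disjoint => x /eqP gx.
  by rewrite disjoint_sym; apply: gdis; rewrite edge_split gx gy ij orbT.
Qed.

Definition detach g (d : 'I_N) : colouring :=
  [ffun x => if x == u then g v :\ d else if x == v then [set d] else g x].

Lemma detach_uE g d : detach g d u = g v :\ d.
Proof. by rewrite ffunE eqxx. Qed.

Lemma detach_vE g d : detach g d v = [set d].
Proof. by rewrite ffunE eq_sym (negbTE neq_uv) eqxx. Qed.

Lemma detachE g d x : x != u -> x != v -> detach g d x = g x.
Proof. by move=> /negbTE xu /negbTE xv; rewrite ffunE xu xv. Qed.

Lemma detach_sub g d x : d \in g v -> detach g d x \subset g (glue x).
Proof.
move=> dv; rewrite /glue; case: (eqVneq x u) => [->|xu]; first by rewrite detach_uE subsetDl.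
case: (eqVneq x v) => [->|xv]; first by rewrite detach_vE sub1set.
by rewrite detachE.
Qed.

Lemma proper_detach g d :
  Defs.proper J h g -> d \in g v -> Defs.proper J' h (detach g d).
Proof.
case/proper_colouringP => g0 gw gdis dv; apply/proper_colouringP; split=> [i|i|i j].
- rewrite Vset_split in_setU1 negb_or => /andP[iu iJ].
  by rewrite detachE ?g0 //; apply: contraNneq iJ => ->.
- case: (eqVneq i u) => [-> _|iu].
    by apply: succn_inj; rewrite -weight_split_u -(gw _ vJ) (cardsD1 d (g v)) dv detach_uE.
  case: (eqVneq i v) => [-> _|iv]; first by rewrite detach_vE cards1 weight_split_v.
  by rewrite Vset_split in_setU1 (negbTE iu) => iJ; rewrite detachE // gw // weight_split.
- rewrite edge_split => /orP[/andP[/eqP-> /eqP->]|ij].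
    by rewrite detach_uE detach_vE disjoint_sym disjoints1 !inE eqxx.
  by apply: disjointWl (detach_sub _ dv) _; apply: disjointWr (detach_sub _ dv) _; apply: gdis.
Qed.

Lemma merge_detach g d :
  Defs.proper J h g -> d \in g v -> merge (detach g d) = g.
Proof.
case/proper_colouringP => g0 _ _ dv; apply/ffunP => x.
case: (eqVneq x u) => [->|xu]; first by rewrite ffunE eqxx g0.
case: (eqVneq x v) => [->|xv]; last by rewrite mergeE // detachE.
by rewrite merge_vE detach_uE detach_vE setUC setD1K.
Qed.

Lemma detach_merge g d : Defs.proper J' h g -> g v = [set d] -> detach (merge g) d = g.
Proof.
move=> pg gv; have := disjoint_split pg; rewrite gv disjoint_sym disjoints1 => dNu.
apply/ffunP => x; case: (eqVneq x u) => [->|xu].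
  by rewrite detach_uE merge_vE gv setUC setU1K.
case: (eqVneq x v) => [->|xv]; first by rewrite detach_vE gv.
by rewrite detachE // mergeE.
Qed.

Lemma merge_fibre g : Defs.proper J h g -> forall g',
  (Defs.proper J' h g' && (merge g' == g)) = (g' \in detach g @: g v).
Proof.
move=> pg g'; apply/andP/imsetP => [[pg' /eqP <-]|[d dv ->]].
  have /cards1P[d g'v] : #|g' v| == 1.
    by case/proper_colouringP: pg' => _ gw _; rewrite gw ?weight_split_v ?v_in_Vset_split.
  by exists d; rewrite ?detach_merge // merge_vE g'v !inE eqxx orbT.
by rewrite proper_detach // merge_detach.
Qed.

Lemma csf_split :
  csf N J' h = ((\sum_(t < weight J v) 'X ^+ t)%:MP * csf N J h)%R.
Proof.
rewrite /csf (partition_big merge (Defs.proper J h)) => [|g']; last exact: proper_merge.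
rewrite mulr_sumr; apply: eq_bigr => g pg.
rewrite (eq_bigl _ _ (merge_fibre pg)) big_imset /=; last first.
  by move=> d e _ _ /(congr1 (fun g' => g' v)); rewrite !detach_vE => /set1_inj.
have [_ gw _] := proper_colouringP _ _ _ pg.
rewrite -(gw _ vJ) -(sum_rank _ (fun t => 'X ^+ t)%R) rmorph_sum mulr_suml.
apply: eq_bigr => d dv; have /disjoint_split guv := proper_detach pg dv.
rewrite asc_split_glue asc_merge // -(xg_merge guv) merge_detach //.
rewrite detach_uE detach_vE ascents_set1r.
by rewrite exprD rmorphM mulrA.
Qed.

End MergeVertices.

Lemma qfactS m : qfact m.+1 = (qfact m * \sum_(t < m.+1) 'X ^+ t)%R.
Proof. by rewrite /qfact big_ord_recr. Qed.

Section FillBlock.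
Variables (n N : nat) (I : {set 'I_n.+1}) (h h' : 'I_n.+1 -> 'I_n.+1) (a b : 'I_n.+1).
Hypotheses (bI : b \in Vset I) (prevI_b : prevI I b = a).
Hypotheses (h_Vset : {in Vset I, forall x, h x \in Vset I}) (b_le_hb : (b <= h b)%N).
Hypotheses (h'_eq_h : {in Vset I, h' =1 h})
  (h'_block : forall j : 'I_n.+1, (a < j <= b)%N -> h' j = h b).

Definition Ifrom (c : nat) := I :|: [set j : 'I_n.+1 | (c <= j < b)%N].

Lemma gap_below_b j : j \in I -> (j < b)%N -> (j <= a)%N.
Proof. by move=> jI jb; rewrite -prevI_b; apply: leq_bigmax_cond; rewrite jI. Qed.

Lemma h'_Ifrom c : (a < c)%N -> {in Vset (Ifrom c), forall x, h' x \in Vset I}.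
Proof.
move=> ac x; rewrite {1}/Vset => /setUP[/setUP[xI|]|xn].
- by rewrite h'_eq_h ?h_Vset // inE xI.
- by rewrite inE => /andP[cx xb]; rewrite h'_block ?h_Vset //; lia.
- by rewrite h'_eq_h ?h_Vset // inE xn orbT.
Qed.

Lemma prevI_Ifrom (c : 'I_n.+1) : (a < c <= b)%N -> prevI (Ifrom c) c = a.
Proof.
move=> /andP[ac cb]; rewrite -prevI_b; apply: eq_bigl => j; rewrite !inE.
by case jI: (j \in I) => /=; [have := gap_below_b jI|]; lia.
Qed.

Lemma csf_Ifrom_step (c : nat) : (a < c < b)%N ->
  csf N (Ifrom c) h' = ((\sum_(t < c.+1 - a) 'X ^+ t)%:MP * csf N (Ifrom c.+1) h')%R.
Proof.
move=> /andP[ac cb]; have vn : (c.+1 < n.+1)%N by have := ltn_ord b; lia.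
pose u := Ordinal (ltnW vn); pose v := Ordinal vn.
have uV : u \notin Vset I.
  rewrite /Vset !inE negb_or -val_eqE /=; apply/andP; split; last lia.
  by apply: contraTN ac => /gap_below_b; rewrite -leqNgt; apply.
have vJ : v \in Vset (Ifrom c.+1).
  case: (ltngtP c.+1 b) => [cb'|?|cbE]; [by rewrite /Vset !inE /= leqnn cb' orbT|lia|].
  have -> : v = b by apply/val_inj/cbE.
  by apply: subsetP bI; apply/setSU/subsetUl.
have -> : Ifrom c = u |: Ifrom c.+1.
  by apply/setP => j; rewrite !inE -val_eqE /=; case: (j \in I); rewrite /= ?orbT //; lia.
have prev_v : prevI (Ifrom c.+1) v = a by apply: (prevI_Ifrom (c := v)) => /=; lia.
rewrite (csf_split N vJ) /weight ?prev_v //=.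
- by move: uV; rewrite /Vset !inE /= ltnn orbF.
- by move=> x /(h'_Ifrom _) xI; apply: contraNneq uV => <-; apply: xI; lia.
- by rewrite h'_block /=; lia.
- by rewrite !h'_block //=; lia.
Qed.

Lemma qfact_csf_Ifrom (c : nat) : (a < c <= b)%N ->
  ((qfact (c - a))%:MP * csf N (Ifrom c) h' = (qfact (b - a))%:MP * csf N I h)%R.
Proof.
move Em : (b - c)%N => m; elim: m c Em => [|m IH] c Em /andP[ac cb].
  have -> : Ifrom c = I by apply/setP => j; rewrite !inE; case: (j \in I) => //=; lia.
  by rewrite (eq_csf _ h'_eq_h) (_ : (c - a = b - a)%N) //; lia.
rewrite csf_Ifrom_step; last lia.
by rewrite mulrA -rmorphM subSn ?(ltnW ac) // -qfactS -subSn ?(ltnW ac) // IH //; lia.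
Qed.

Lemma csf_fill :
  csf N (I :|: [set j : 'I_n.+1 | (a < j < b)%N]) h' = ((qfact (b - a))%:MP * csf N I h)%R.
Proof.
case: (ltnP a b) => [ab|ba].
  rewrite -(qfact_csf_Ifrom (c := a.+1)) ?ltnSn ?ab // subSnn.
  by rewrite /qfact !big_ord1 expr0 mpolyC1 mul1r.
rewrite (_ : (b - a = 0)%N) ?/qfact ?big_ord0 ?mpolyC1 ?mul1r; last lia.
rewrite -(eq_csf _ h'_eq_h); congr csf.
by apply/setP => j; rewrite !inE; case: (j \in I) => //=; lia.
Qed.

End FillBlock.

Section IndexSequence.
Variables (n : nat) (I : {set 'I_n.+1}).
Hypothesis I_inner : I \subset [set i : 'I_n.+1 | (0 < i < n)%N].

Local Notation leo := (fun x y : 'I_n.+1 => (x <= y)%N).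
Local Notation s0 := (ord0 :: sort leo (enum I)).

Lemma size_iseq : size s0 = #|I|.+1.
Proof. by rewrite /= size_sort cardE. Qed.

Lemma mem_iseq x : (x \in behead s0) = (x \in I).
Proof. by rewrite mem_sort mem_enum. Qed.

Lemma sorted_iseq : sorted leo s0.
Proof. by rewrite /= path_min_sorted ?sort_sorted //; apply/allP. Qed.

Lemma uniq_iseq : uniq s0.
Proof.
rewrite /= sort_uniq enum_uniq andbT mem_sort mem_enum.
by apply/negP => /(subsetP I_inner); rewrite inE.
Qed.

Lemma leq_nth_iseq i j : (i <= j < size s0)%N ->
  (nth ord_max s0 i <= nth ord_max s0 j)%N.
Proof.
have leo_trans : transitive leo by move=> ? ? ?; apply: leq_trans.
move=> /andP[ij js]; apply: (sorted_leq_nth leo_trans (fun x => leqnn x) _ sorted_iseq) => //.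
by rewrite inE (leq_ltn_trans ij).
Qed.

Lemma iseq_ltn_index i j : (i < size s0)%N ->
  (nth ord_max s0 i < nth ord_max s0 j)%N -> (i < j)%N.
Proof.
move=> ? lt_ij; rewrite ltnNge; apply: contraTN lt_ij => ji.
by rewrite -leqNgt leq_nth_iseq // ji.
Qed.

Lemma iseq_Vset k : (0 < k)%N -> iseq I k \in Vset I.
Proof.
rewrite /iseq /Vset inE; case: k => // k _ /=.
case: (ltnP k (size (sort leo (enum I)))) => [ks|/(nth_default _)->]; last by rewrite inE eqxx orbT.
by rewrite -mem_iseq mem_nth.
Qed.

Lemma iseq_gap k j : (0 < k <= #|I|.+1)%N ->
  j \in I -> (j < iseq I k)%N -> (j <= iseq I k.-1)%N.
Proof.
rewrite -size_iseq => /andP[k0 kI] jI jb.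
have js : j \in behead s0 by rewrite mem_iseq.
have jE : nth ord_max s0 (index j (behead s0)).+1 = j by rewrite /= nth_index.
have pk : ((index j (behead s0)).+1 < k)%N.
  by apply: iseq_ltn_index; rewrite ?jE //= ltnS index_mem.
by rewrite -jE leq_nth_iseq // -ltnS prednK // pk; lia.
Qed.

Lemma iseq_pred_in k : (1 < k <= #|I|.+1)%N ->
  iseq I k.-1 \in I /\ (iseq I k.-1 < iseq I k)%N.
Proof.
rewrite -size_iseq; case: k => [|[|k]] // /andP[_ kI].
have aI : iseq I k.+1 \in I by rewrite /iseq /= -mem_iseq mem_nth.
split=> //; rewrite /iseq; case: (ltnP k.+2 (size s0)) => [ks|/(nth_default _)->].
  rewrite ltn_neqAle leq_nth_iseq ?ks ?andbT // val_eqE.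
  by rewrite nth_uniq ?uniq_iseq //; lia.
by have := subsetP I_inner _ aI; rewrite inE => /andP[].
Qed.

Lemma prevI_iseq k : (0 < k <= #|I|.+1)%N -> prevI I (iseq I k) = iseq I k.-1.
Proof.
move=> kI; apply/eqP; rewrite eqn_leq; apply/andP; split.
  by apply/bigmax_leqP => j /andP[jI]; apply: iseq_gap.
case: (ltnP 1 k) => [k1|]; last by case: k kI => [|[]].
have [|aI ab] := @iseq_pred_in k; first by rewrite k1; case/andP: kI.
by apply: leq_bigmax_cond; rewrite aI ab.
Qed.

End IndexSequence.

Theorem lemma4p7 (n : nat) (I : {set 'I_n.+1}) (h h' : 'I_n.+1 -> 'I_n.+1)
  (k : nat) :
  I \subset [set i : 'I_n.+1 | (0 < i < n)%N] ->
  inH I h ->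
  (1 <= k <= #|I|.+1)%N ->
  let a := iseq I k.-1 in
  let b := iseq I k in
  let I' := I :|: [set j : 'I_n.+1 | (a < j < b)%N] in
  (forall j, j \in Vset I -> h' j = h j) ->
  (forall j : 'I_n.+1, (a < j <= b)%N -> h' j = h b) ->
  forall N : nat,
    csf N I' h' = ((qfact (b - a))%:MP * csf N I h)%R.
Proof.
move=> I_inner [h_Vset h_ge _] kI a b I' h'_I h'_block N.
have bI : b \in Vset I by apply: iseq_Vset; case/andP: kI.
exact: (csf_fill N bI (prevI_iseq I_inner kI) h_Vset (h_ge _ bI) h'_I h'_block).
Qed.
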